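(* Let $L, H \in \mathcal{L}$ and $g = (w,t) \in S$ with $L^g \leq H$. Then: (a) $\zeta_{L,H,g} = \hat{\zeta}_{L,H,w} - \lambda^w_t$; (b) if $\zeta_{L,H,g} \in Z^1(L,T)$, then $\zeta_{L,H,h} \in Z^1(L,T)$ for all $h \in gT$; (c) there exist $\gamma \in Z^1(L,T)$ and $\sigma \in Z^1(H,T)$ with $C_L(\gamma)^g \leq C_H(\sigma)$ if and only if $\zeta_{L,H,g} \in Z^1(L,T)$; (d) (for $H = L$ and $\gamma \in Z^1(L,T)$) $g$ centralises $C_L(\gamma)$ if and only if $w$ centralises $L$ and $\zeta_{L,L,g} = \gamma^g - \gamma$, where $\gamma^g(l) = \gamma(l^g)^{g^{-1}}$.
   Context: Conventions: for a group $G$ acting on the right on an additive abelian group $M$, $Z^n(G,M)$, $B^n(G,M)$ are normalised cocycles and coboundaries; $\mathrm{Ext}(\tau)$ for $\tau \in Z^2(G,M)$ is $G\times M$ with $(g,m)(h,n) = (gh, m^h+n+\tau(g,h))$. Setting: $S$ is an infinite pro-$p$-group of finite coclass, $T = \gamma_\ell(S)$ ($\ell$ large) with $T\cong\mathbb{Z}_p^d$, $P=S/T$ finite, the series $T_0=T$, $T_{i+1}=[T_i,S]$ having all indices $p$; $T$ is an additive $P$-module via conjugation; $S = \mathrm{Ext}(\rho)$ with $\rho\in Z^2(P,T)$, $\epsilon: S \to P$ the projection, $T = \{(1,t)\}$; $g \in S$ acts on $P$ and $T$ via $\epsilon(g)$. For $L\leq P$, $\overline{L}=\epsilon^{-1}(L)$.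 $\mathcal{L}$ = elementary abelian $L\leq P$ with $\rho_L \in B^2(L,T)$. For $L\in\mathcal{L}$ fix a complement $C_L = \{c_L(l)\}$ to $T$ in $\overline{L}$, $c_L(l) = (l, t_L(l))$; $C_L(\delta) = \{(l,t_L(l)+\delta(l))\}$ for $\delta\in Z^1(L,T)$. For $L,H\in\mathcal{L}$, $g\in S$ with $L^g\leq H$: $\zeta_{L,H,g}: L\to S$, $l\mapsto (c_H(l^g)^{-1})^{g^{-1}} c_L(l)$ (values identified with elements of $T$). For $w\in P$: $\hat{\zeta}_{L,H,w}: L \to T$, $l \mapsto (t_L(l)^w - t_H(l^w) + \rho(l,w) - \rho(w,l^w))^{w^{-1}}$. For $t \in T$: $\lambda_t: L\to T$, $l \mapsto [t,l] := t^l - t$, and $\lambda_t^w: L \to T$, $l \mapsto [t,l^w]^{w^{-1}}$. *)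

(* Abstract setting of the extension S = Ext(rho) of a finite
   p-group P by an additive P-module T (right action). *)
From mathcomp Require Import all_boot all_algebra all_fingroup all_solvable.
Set Implicit Arguments. Unset Strict Implicit. Unset Printing Implicit Defensive.
Import GRing.Theory.
Local Open Scope ring_scope.
Local Open Scope group_scope.

Definition right_module (P : finGroupType) (T : zmodType) (act : T -> P -> T) :=
  [/\ forall t, act t 1 = t,
      forall t x y, act t (x * y) = act (act t x) y &
      forall s t x, act (s + t) x = act s x + act t x].

Definition Z2 (P : finGroupType) (T : zmodType) (act : T -> P -> T) (rho : P -> P -> T) :=
  [/\ forall x, rho 1 x = 0, forall x, rho x 1 = 0 &
      forall x y z, act (rho x y) z + rho (x * y) z = rho y z + rho x (y * z)].

Definition B2 (P : finGroupType) (T : zmodType) (act : T -> P -> T)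
    (A : {set P}) (rho : P -> P -> T) :=
  exists f : P -> T, f 1 = 0 /\
    {in A &, forall x y, rho x y = act (f x) y + f y - f (x * y)}.

(* 1-cocycles Z^1(A,T) (functions are only relevant on A) *)
Definition Z1 (P : finGroupType) (T : zmodType) (act : T -> P -> T)
    (A : {set P}) (d : P -> T) :=
  {in A &, forall x y, d (x * y) = act (d x) y + d y}.

Definition mulS (P : finGroupType) (T : zmodType) (act : T -> P -> T) (rho : P -> P -> T)
    (a b : P * T) : P * T :=
  (a.1 * b.1, act a.2 b.1 + b.2 + rho a.1 b.1).

Definition invS (P : finGroupType) (T : zmodType) (act : T -> P -> T) (rho : P -> P -> T)
    (a : P * T) : P * T :=
  (a.1^-1, - act a.2 a.1^-1 - rho a.1 a.1^-1).

Definition conjS (P : finGroupType) (T : zmodType) (act : T -> P -> T) (rho : P -> P -> T)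
    (x g : P * T) : P * T :=
  mulS act rho (mulS act rho (invS act rho g) x) g.

(* C_L = {(l, tL l) | l in L} is a subgroup of Ext(rho) (hence a complement
   to T in the preimage of L) *)
Definition complement_fn (P : finGroupType) (T : zmodType) (act : T -> P -> T)
    (rho : P -> P -> T) (L : {set P}) (tL : P -> T) :=
  {in L &, forall l l', mulS act rho (l, tL l) (l', tL l') = (l * l', tL (l * l'))}.

Definition inC (P : finGroupType) (T : zmodType) (L : {set P}) (tL d : P -> T)
    (x : P * T) : Prop :=
  x.1 \in L /\ x.2 = tL x.1 + d x.1.

(* zeta_{L,H,g}(l) = (c_H(l^g)^-1)^(g^-1) c_L(l), an element of T *)
Definition zeta (P : finGroupType) (T : zmodType) (act : T -> P -> T) (rho : P -> P -> T)
    (tL tH : P -> T) (g : P * T) (l : P) : T :=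
  (mulS act rho
     (conjS act rho (invS act rho (l ^ g.1, tH (l ^ g.1))) (invS act rho g))
     (l, tL l)).2.

Definition zetahat (P : finGroupType) (T : zmodType) (act : T -> P -> T) (rho : P -> P -> T)
    (tL tH : P -> T) (w : P) (l : P) : T :=
  act (act (tL l) w - tH (l ^ w) + rho l w - rho w (l ^ w)) w^-1.

(* lambda_t^w (l) = [t, l^w]^(w^-1) where [t,x] = t^x - t *)
Definition lambdaw (P : finGroupType) (T : zmodType) (act : T -> P -> T)
    (w : P) (t : T) (l : P) : T :=
  act (act t (l ^ w) - t) w^-1.

(* The crucial identity is c_L(l)^g = c_H(l^g) * zeta(l)^g, which holds because
   g c_H(l^g)^-1 g^-1 c_L(l) lies in T, and conjugation by g = (w,t) acts on T as
   w does.  Comparing with an explicit formula for (l, x)^g gives (a); (b) follows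
   since zeta changes by the coboundary lambda^w_s when g is multiplied by (1,s);
   (c) and (d) are read off from the formula
   (l, x)^g = (l^w, t_H(l^w) + (zeta(l) + x - t_L(l))^w). *)
From mathcomp Require Import all_boot all_algebra all_fingroup all_solvable.
Set Implicit Arguments. Unset Strict Implicit. Unset Printing Implicit Defensive.
Import GRing.Theory.
Local Open Scope ring_scope.
Local Open Scope group_scope.

Section ExtGroup.
Variables (P : finGroupType) (T : zmodType) (act : T -> P -> T) (rho : P -> P -> T).
Hypothesis act_module : right_module act.
Hypothesis rho_cocycle : Z2 act rho.

Local Notation mul := (mulS act rho).
Local Notation inv := (invS act rho).
Local Notation conj := (conjS act rho).

Lemma ract1 t : act t 1 = t. Proof. by case: act_module. Qed.
Lemma ractM t x y : act (act t x) y = act t (x * y). Proof. by case: act_module => _ ->. Qed.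
Lemma ractD s t x : act (s + t) x = act s x + act t x. Proof. by case: act_module. Qed.

Lemma ract0 x : act 0 x = 0.
Proof. by apply: (@addrI _ (act 0 x)); rewrite -ractD !addr0. Qed.

Lemma ractN s x : act (- s) x = - act s x.
Proof. by apply: (@addrI _ (act s x)); rewrite -ractD !subrr ract0. Qed.

Lemma ractB s t x : act (s - t) x = act s x - act t x.
Proof. by rewrite ractD ractN. Qed.

Lemma ractK x : cancel (act^~ x) (act^~ x^-1).
Proof. by move=> s; rewrite ractM mulgV ract1. Qed.

Lemma ractVK x : cancel (act^~ x^-1) (act^~ x).
Proof. by move=> s; rewrite ractM mulVg ract1. Qed.

Lemma rho1g x : rho 1 x = 0. Proof. by case: rho_cocycle. Qed.
Lemma rhog1 x : rho x 1 = 0. Proof. by case: rho_cocycle. Qed.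

Lemma rho_cocycleE x y z : act (rho x y) z + rho (x * y) z = rho y z + rho x (y * z).
Proof. by case: rho_cocycle. Qed.

Lemma mulSA : associative mul.
Proof.
move=> [a1 a2] [b1 b2] [c1 c2]; rewrite /mulS /=; congr pair; first by rewrite mulgA.
symmetry; rewrite !ractD !ractM -!addrA; congr (_ + (_ + _)); rewrite addrCA; congr (_ + _).
exact: rho_cocycleE.
Qed.

Lemma mul1S : left_id (1, 0) mul.
Proof. by move=> [a1 a2]; rewrite /mulS /= mul1g ract0 add0r rho1g addr0. Qed.

Lemma mulS1 : right_id (1, 0) mul.
Proof. by move=> [a1 a2]; rewrite /mulS /= mulg1 ract1 rhog1 !addr0. Qed.

Lemma mulVS a : mul (inv a) a = (1, 0).
Proof.
case: a => a1 a2; rewrite /mulS /invS /=; congr pair; first by rewrite mulVg.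
have := rho_cocycleE a1 a1^-1 a1; rewrite mulgV mulVg rho1g rhog1 !addr0 => E.
by rewrite ractB ractN ractVK E addrAC subrK addrC subrr.
Qed.

Lemma mulSV a : mul a (inv a) = (1, 0).
Proof.
case: a => a1 a2; rewrite /mulS /invS /=; congr pair; first by rewrite mulgV.
by rewrite addrA subrr add0r addrC subrr.
Qed.

Lemma mulKS a : cancel (mul a) (mul (inv a)).
Proof. by move=> b; rewrite mulSA mulVS mul1S. Qed.

Lemma mulKVS a : cancel (mul (inv a)) (mul a).
Proof. by move=> b; rewrite mulSA mulSV mul1S. Qed.

Lemma invSK : involutive inv.
Proof. by move=> a; rewrite -[inv (inv a)]mulS1 -(mulVS a) mulSA mulVS mul1S. Qed.

Lemma conjSM a b g : conj (mul a b) g = mul (conj a g) (conj b g).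
Proof. by rewrite /conjS -!mulSA mulKVS. Qed.

Lemma commuteS_conj g x : mul g x = mul x g <-> conj x g = x.
Proof.
rewrite /conjS; split => E; first by rewrite -mulSA -E mulKS.
by rewrite -{1}E -!mulSA mulKVS.
Qed.

Lemma mulS_T a b c : mul (a, b) (1, c) = (a, b + c).
Proof. by rewrite /mulS /= mulg1 ract1 rhog1 addr0. Qed.

Lemma conjS_pair l x w t : conj (l, x) (w, t) =
  (l ^ w, act x w + t - act t (l ^ w) + rho l w - rho w (l ^ w)).
Proof.
rewrite /conjS /mulS /invS /=; congr pair; first by rewrite conjgE mulgA.
have E1 := rho_cocycleE w^-1 l w.
have E2 := rho_cocycleE w w^-1 (l * w).
rewrite mulgV rho1g addr0 mulgA in E2.
rewrite !ractD !ractN !ractM conjgE mulgA E2 opprD.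
by rewrite !addrA [LHS](ACl ((((4*6)*1)*((5*7)*2))*3)%AC) /= E1 addrK.
Qed.

Lemma conjS_T z w t : conj (1, z) (w, t) = (1, act z w).
Proof. by rewrite conjS_pair conj1g ract1 rho1g rhog1 !addrK. Qed.

Lemma Z1N (A : {set P}) d : Z1 act A d -> Z1 act A (fun x => - d x).
Proof. by move=> Zd x y Ax Ay; rewrite Zd // ractN opprD. Qed.

Lemma Z1D (A : {set P}) d e : Z1 act A d -> Z1 act A e -> Z1 act A (fun x => d x + e x).
Proof.
move=> Zd Ze x y Ax Ay; rewrite Zd // Ze // ractD.
by rewrite !addrA [in LHS](ACl (((1*3)*2)*4)%AC).
Qed.

Lemma Z1B (A : {set P}) d e : Z1 act A d -> Z1 act A e -> Z1 act A (fun x => d x - e x).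
Proof. by move=> Zd Ze; apply: Z1D (Z1N Ze). Qed.

Lemma Z1_conj (A B : {set P}) w d : A :^ w \subset B -> Z1 act B d ->
  Z1 act A (fun x => act (d (x ^ w)) w^-1).
Proof.
move=> sAB Zd x y Ax Ay.
have Bw z : z \in A -> z ^ w \in B by move=> Az; rewrite (subsetP sAB) ?memJ_conjg.
rewrite conjMg Zd ?Bw // ractD !ractM; congr (act _ _ + _).
by rewrite conjgE !mulgA mulgK.
Qed.

Lemma lambdawD w s u l :
  lambdaw act w (s + u) l = lambdaw act w s l + lambdaw act w u l.
Proof.
rewrite /lambdaw -ractD; congr (act _ _); rewrite ractD opprD.
by rewrite !addrA [LHS](ACl (((1*3)*2)*4)%AC).
Qed.

Lemma lambdaw_Z1 (A : {set P}) w s : Z1 act A (lambdaw act w s).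
Proof.
move=> x y _ _; rewrite /lambdaw !ractB !ractM !conjgE !mulgA !mulgK.
by rewrite addrA subrK.
Qed.

Lemma conjS_zeta tL tH l w t :
  conj (l, tL l) (w, t) = (l ^ w, tH (l ^ w) + act (zeta act rho tL tH (w, t) l) w).
Proof.
set g := (w, t); set d := (l ^ w, tH (l ^ w)); set c := (l, tL l).
set e := mul (conj (inv d) (inv g)) c.
have e1 : e = (1, zeta act rho tL tH g l).
  rewrite [e]surjective_pairing; congr pair.
  by rewrite /e /mulS /conjS /invS /= invgK conjgE !invMg invgK !mulgA mulgK mulgV mul1g mulVg.
have ce : c = mul (mul (mul g d) (inv g)) e.
  by rewrite /e /conjS invSK -!mulSA mulKS !mulKVS.
by rewrite {1}ce conjSM {1}/conjS -!mulSA !mulKS e1 conjS_T mulS_T.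
Qed.

Lemma conjS_zeta_pair tL tH l x w t : conj (l, x) (w, t) =
  (l ^ w, tH (l ^ w) + act (zeta act rho tL tH (w, t) l + (x - tL l)) w).
Proof.
have -> : (l, x) = mul (l, tL l) (1, x - tL l) by rewrite mulS_T addrC subrK.
by rewrite conjSM (conjS_zeta _ tH) conjS_T mulS_T -addrA -ractD.
Qed.

Lemma inC_conjS_zeta (B : {set P}) tL tH sig l x w t :
  inC B tH sig (conj (l, tL l + x) (w, t)) <->
  l ^ w \in B /\ zeta act rho tL tH (w, t) l = act (sig (l ^ w)) w^-1 - x.
Proof.
rewrite /inC (conjS_zeta_pair tL tH) /= [tL l + x - _]addrAC subrr add0r.
split=> -[Bl E]; split=> //; first by rewrite -(addrI _ E) ractK addrK.
by rewrite E subrK ractVK.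
Qed.

Lemma commuteS_zeta tL l x w t :
  mul (w, t) (l, tL l + x) = mul (l, tL l + x) (w, t) <->
  l ^ w = l /\ zeta act rho tL tL (w, t) l = act x w^-1 - x.
Proof.
split=> [/commuteS_conj | [Ew E]]; last apply/commuteS_conj;
  rewrite (conjS_zeta_pair tL tL) [tL l + x - _]addrAC subrr add0r.
  by case=> Ew; rewrite Ew => /addrI E; split=> //; rewrite -{1}E ractK addrK.
by rewrite Ew E subrK ractVK.
Qed.

Lemma zetaE tL tH w t l :
  zeta act rho tL tH (w, t) l = zetahat act rho tL tH w l - lambdaw act w t l.
Proof.
have := f_equal snd (conjS_pair l (tL l) w t); rewrite (conjS_zeta _ tH) /= => E.
apply: (can_inj (ractK w)); rewrite /zetahat /lambdaw ractB !ractVK.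
rewrite (canRL (addKr _) E) opprB !addrA.
by rewrite [LHS](ACl (((((2*1)*5)*6)*3)*4)%AC).
Qed.

Lemma zeta_mulT tL tH w t s l :
  zeta act rho tL tH (mul (w, t) (1, s)) l
  = zeta act rho tL tH (w, t) l - lambdaw act w s l.
Proof. by rewrite mulS_T !zetaE lambdawD opprD addrA. Qed.

End ExtGroup.

Theorem lemma3p3 (p : nat) (P : finGroupType) (T : zmodType)
    (act : T -> P -> T) (rho : P -> P -> T)
    (L H : {group P}) (tL tH : P -> T) (w : P) (t : T) :
  prime p -> p.-group [set: P] ->
  right_module act -> Z2 act rho ->
  (* L, H in the family \mathcal{L} *)
  p.-abelem L -> B2 act L rho -> p.-abelem H -> B2 act H rho ->
  (* the fixed complements C_L, C_H *)
  complement_fn act rho L tL -> complement_fn act rho H tH ->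
  (* g = (w,t) with L^g <= H *)
  L :^ w \subset H ->
  [/\
   (* (a) *)
   {in L, forall l, zeta act rho tL tH (w, t) l
                    = zetahat act rho tL tH w l - lambdaw act w t l},
   (* (b) *)
   Z1 act L (zeta act rho tL tH (w, t)) ->
     forall s : T, Z1 act L (zeta act rho tL tH (mulS act rho (w, t) (1, s))),
   (* (c) *)
   (exists (gam sig : P -> T), [/\ Z1 act L gam, Z1 act H sig &
       {in L, forall l, inC H tH sig (conjS act rho (l, tL l + gam l) (w, t))}])
     <-> Z1 act L (zeta act rho tL tH (w, t)) &
   (* (d) *)
   H = L -> forall gam : P -> T, Z1 act L gam ->
     ({in L, forall l, mulS act rho (w, t) (l, tL l + gam l)
                       = mulS act rho (l, tL l + gam l) (w, t)}
      <-> (w \in 'C(L) /\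
           {in L, forall l, zeta act rho tL tL (w, t) l
                            = act (gam (l ^ w)) w^-1 - gam l}))].
Proof.
(* The identities only use the module and cocycle axioms and L^w <= H. *)
move=> _ _ act_module rho_cocycle _ _ _ _ _ _ sLH.
have inC_zeta := inC_conjS_zeta act_module rho_cocycle.
split.
- by move=> l _; apply: zetaE.
- move=> Zzeta s x y Lx Ly; rewrite !(zeta_mulT act_module rho_cocycle).
  exact: (Z1B act_module Zzeta (lambdaw_Z1 act_module w s)) _ _ Lx Ly.
- split=> [[gam [sig [Zgam Zsig Cg]]] | Zzeta].
  + have zetaE l : l \in L -> zeta act rho tL tH (w, t) l = act (sig (l ^ w)) w^-1 - gam l.
      by move=> /Cg/inC_zeta[].
    move=> x y Lx Ly; rewrite !zetaE ?groupM //.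
    exact: (Z1B act_module (Z1_conj act_module sLH Zsig) Zgam) _ _ Lx Ly.
  + exists (fun l => - zeta act rho tL tH (w, t) l), (fun _ => 0).
    split=> [|x y _ _ | l Ll]; first exact: (Z1N act_module Zzeta).
      by rewrite (ract0 act_module) addr0.
    apply/inC_zeta; rewrite (ract0 act_module) sub0r opprK.
    by rewrite (subsetP sLH) ?memJ_conjg.
- move=> eHL gam Zgam; subst H.
  have commute_zeta := commuteS_zeta act_module rho_cocycle tL.
  split=> [Cgam | [cLw zetaE] l Ll].
  + have fixed l : l \in L -> l ^ w = l /\
        zeta act rho tL tL (w, t) l = act (gam l) w^-1 - gam l.
      by move=> Ll; apply/commute_zeta/Cgam.
    split=> [|l /fixed[Ew ->]]; last by rewrite Ew.
    by apply/centP => l /fixed[/conjg_fixP/commgP/commute_sym].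
  + have Ew : l ^ w = l by apply/conjg_fixP/commgP/commute_sym/(centP cLw).
    by apply/commute_zeta; rewrite zetaE // Ew.
Qed.
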